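(* Let $\Delta^{(w)}$ be a dyadic cube of rank $w$, let $\sum_{\mathbf n\in\mathbb N_0^d}a_{\mathbf n}W_{\mathbf n}$ be a $d$-fold Walsh series and $\tau$ the quasimeasure generated by it. If $\tau(\Delta)=0$ for every dyadic cube $\Delta\subset\Delta^{(w)}$, then $S_{2^w\mathbf M}(\mathbf g)=0$ for all $\mathbf g\in\Delta^{(w)}$ and all $\mathbf M\in\mathbb N^d$.
   Context: Fix $d\ge2$. $\mathbb G$ is the dyadic group: sequences $g=(g_k)_{k\ge0}$, $g_k\in\{0,1\}$, coordinatewise addition mod 2, product topology; $\mathbb G^d$ its $d$-th power. For $n\in\mathbb N_0$, $n=\sum_kn_k2^k$, $n_k\in\{0,1\}$. Dyadic interval of rank $k$: $\Delta^{(k)}_m=\{g: g_t=m_{k-1-t},\ 0\le t<k\}$, $0\le m<2^k$; dyadic cube of rank $k$: $\Delta^{(k)}_{\mathbf m}=\prod_l\Delta^{(k)}_{m^l}$. Vector order coordinatewise, $\mathbf 1=(1,\dots,1)$. Walsh functions $W_n(g)=\prod_k(-1)^{g_kn_k}$, $W_{\mathbf n}(\mathbf g)=\prod_lW_{n^l}(g^l)$. Partial sums $S_{\mathbf N}(\mathbf g)=\sum_{\mathbf n<\mathbf N}a_{\mathbf n}W_{\mathbf n}(\mathbf g)$. A quasimeasure is a function $\tau$ on dyadic cubes with $\tau(\Delta^{(k)}_{\mathbf m})=\sum_{\boldsymbol\sigma\in\{0,1\}^d}\tau(\Delta^{(k+1)}_{2\mathbf m+\boldsymbol\sigma})$; the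 quasimeasure generated by the series is $\tau(\Delta^{(k)})=2^{-kd}S_{2^k\mathbf 1}(\mathbf g)$ for $\mathbf g\in\Delta^{(k)}$ ($S_{2^k\mathbf 1}$ is constant on each dyadic cube of rank $k$). *)

From mathcomp Require Import all_boot all_order all_algebra.
Set Implicit Arguments. Unset Strict Implicit. Unset Printing Implicit Defensive.
Import Order.TTheory GRing.Theory Num.Theory.
Local Open Scope ring_scope.

Definition dyadic := nat -> bool.
Definition dyadicd (d : nat) := 'I_d -> dyadic.

Definition bit (n k : nat) : bool := odd (n %/ 2 ^ k).

(* W_n(g) = prod_k (-1)^{g_k n_k}; only k < n can have n_k = 1. *)
Definition walsh (R : nzRingType) (n : nat) (g : dyadic) : R :=
  \prod_(k < n) (if g k && bit n k then -1 else 1).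

Definition walshd (R : nzRingType) (d : nat) (n : 'I_d -> nat) (g : dyadicd d) : R :=
  \prod_(l < d) walsh R (n l) (g l).

Definition psum (R : nzRingType) (d : nat) (a : ('I_d -> nat) -> R)
    (N : 'I_d -> nat) (g : dyadicd d) : R :=
  \sum_(n : {ffun 'I_d -> 'I_(\max_(l < d) N l)} | [forall l, (n l < N l)%N])
     a (fun l => nat_of_ord (n l)) * walshd R (fun l => nat_of_ord (n l)) g.

Definition in_cube (d : nat) (k : nat) (m : 'I_d -> nat) (g : dyadicd d) : Prop :=
  forall (l : 'I_d) (t : nat), (t < k)%N -> g l t = bit (m l) (k - 1 - t).

Definition cube_point (d : nat) (k : nat) (m : 'I_d -> nat) : dyadicd d :=
  fun l t => if (t < k)%N then bit (m l) (k - 1 - t) else false.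

(* The quasimeasure generated by the series:
   tau(Delta^(k)_m) = 2^{-kd} S_{2^k 1}(g), g in Delta^(k)_m. *)
Definition tau (R : fieldType) (d : nat) (a : ('I_d -> nat) -> R)
    (k : nat) (m : 'I_d -> nat) : R :=
  ((2 ^ (k * d))%:R)^-1 * psum a (fun _ => 2 ^ k)%N (cube_point k m).

From mathcomp Require Import all_boot all_order all_algebra zify ring.
From Stdlib Require Import FunctionalExtensionality.
Set Implicit Arguments. Unset Strict Implicit. Unset Printing Implicit Defensive.
Import Order.TTheory GRing.Theory Num.Theory.
Local Open Scope ring_scope.

(* Take k >= w with 2^w M_l <= 2^k for all l.  Orthogonality of the Walsh system on the
   points x_m of the rank-k dyadic cubes gives
     2^(kd) S_N(g) = sum_m S_(2^k 1)(x_m) * D_N(x_m, g),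
   where the kernel D_N(x, g) = sum_(n < N) W_n(x) W_n(g) is the product over
   the coordinates l of one-dimensional Walsh-Dirichlet kernels D_(N_l).  If the
   cube of x_m lies in Delta^(w), the first factor is 2^(kd) tau = 0.  Otherwise
   x_m and g differ in some coordinate l at a digit t < w, and D_(2^w M_l)
   vanishes: it is a sum of M_l blocks, each a multiple of D_(2^w), and
   D_(2^w)(x, y) = 0 as soon as x and y differ below digit w. *)

Lemma bit_small n t : (n < 2 ^ t)%N -> bit n t = false.
Proof. by move=> lt_n; rewrite /bit divn_small. Qed.

Lemma bit_pow2_mul_addr_low c r w t : (t < w)%N ->
  bit (2 ^ w * c + r) t = bit r t.
Proof.
move=> lt_tw; rewrite /bit divnDl; last by rewrite dvdn_mulr // dvdn_exp2l // ltnW.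
have -> : (2 ^ w * c = 2 ^ t * (2 * (2 ^ (w - t.+1) * c)))%N.
  by rewrite mulnA -expnSr mulnA -expnD subnKC.
by rewrite mulKn ?expn_gt0 // oddD oddM.
Qed.

Lemma bit_pow2_mul_low c w t : (t < w)%N -> bit (2 ^ w * c) t = false.
Proof. by move=> lt_tw; have := bit_pow2_mul_addr_low c 0 lt_tw; rewrite addn0 /bit div0n. Qed.

Lemma bit_pow2_mul_addr_high c r w t : (r < 2 ^ w)%N -> (w <= t)%N ->
  bit (2 ^ w * c + r) t = bit (2 ^ w * c) t.
Proof.
move=> lt_r le_wt; rewrite /bit -(subnKC le_wt) expnD !divnMA.
by rewrite mulKn ?expn_gt0 // mulnC divnMDl ?expn_gt0 // (divn_small lt_r) addn0.
Qed.

Lemma bit_inj k n n' : (n < 2 ^ k)%N -> (n' < 2 ^ k)%N ->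
  (forall t, (t < k)%N -> bit n t = bit n' t) -> n = n'.
Proof.
elim: k n n' => [|k IH] n n'; first by rewrite !ltnS !leqn0 => /eqP -> /eqP ->.
move=> lt_n lt_n' eq_bits.
have bitS m t : bit m t.+1 = bit m./2 t by rewrite /bit expnS divnMA -divn2.
have half_eq : n./2 = n'./2.
  by apply: IH; rewrite ?ltn_half_double -?mul2n -?expnS // => t lt_tk; rewrite -!bitS eq_bits.
have odd_eq : odd n = odd n' by have := eq_bits 0%N isT; rewrite /bit !divn1.
by rewrite -[n]odd_double_half -[n']odd_double_half half_eq odd_eq.
Qed.

Section WalshRing.

Variable R : nzRingType.

Lemma walshE n x T : (n < 2 ^ T)%N ->
  walsh R n x = \prod_(t < T) (if x t && bit n t then -1 else 1).
Proof.
pose F t : R := if x t && bit n t then -1 else 1.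
have widen m m' : (n < 2 ^ m)%N -> (m <= m')%N -> \prod_(t < m) F t = \prod_(t < m') F t.
  move=> lt_n le_mm'; rewrite (big_ord_widen _ F le_mm') big_mkcond /=.
  apply: eq_bigr => t _; case: ltnP => // le_mt.
  by rewrite /F bit_small ?andbF // (leq_trans lt_n) ?leq_exp2l.
move=> lt_n; rewrite /walsh -/F (widen _ _ (ltn_expl n (isT : (1 < 2)%N)) (leq_maxl n T)).
by rewrite (widen _ _ lt_n (leq_maxr n T)).
Qed.

Lemma eq_walsh n x y T : (n < 2 ^ T)%N ->
  (forall t, (t < T)%N -> x t = y t) -> walsh R n x = walsh R n y.
Proof. by move=> lt_n eq_xy; rewrite !(walshE _ lt_n); apply: eq_bigr => t _; rewrite eq_xy. Qed.

Lemma walsh_pow2 w x : walsh R (2 ^ w) x = if x w then -1 else 1.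
Proof.
have lt_w : (2 ^ w < 2 ^ w.+1)%N by rewrite ltn_exp2l.
rewrite (walshE _ lt_w) big_ord_recr /= big1 ?mul1r.
  by rewrite /bit divnn expn_gt0 /= andbT.
by move=> t _; have := bit_pow2_mul_low 1 (ltn_ord t); rewrite muln1 => ->; rewrite andbF.
Qed.

End WalshRing.

(* dirichlet R N x y is the Walsh-Dirichlet kernel D_N evaluated at x + y. *)
Definition dirichlet (R : nzRingType) (N : nat) (x y : dyadic) : R :=
  \sum_(j < N) walsh R j x * walsh R j y.

(* cube_point k m l is convertible to interval_point k (m l). *)
Definition interval_point (k m : nat) : dyadic :=
  fun t => if (t < k)%N then bit m (k - 1 - t) else false.

Section WalshComRing.

Variable R : comNzRingType.

Lemma walsh_sqr n x : walsh R n x * walsh R n x = 1.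
Proof.
rewrite /walsh -big_split /=; apply: big1 => t _.
by case: ifP => _; rewrite ?mulrNN mulr1.
Qed.

Lemma walshD_pow2_mul c r w x : (r < 2 ^ w)%N ->
  walsh R (2 ^ w * c + r) x = walsh R (2 ^ w * c) x * walsh R r x.
Proof.
move=> lt_r; have lt_cw : (2 ^ w * c + r < 2 ^ (w + c))%N.
  apply: (@leq_trans (2 ^ w * c.+1)); first by rewrite mulnS addnC ltn_add2r.
  by rewrite expnD leq_mul2l ltn_expl // orbT.
have lt_c : (2 ^ w * c < 2 ^ (w + c))%N by apply: leq_ltn_trans lt_cw; rewrite leq_addr.
have lt_r' : (r < 2 ^ (w + c))%N by rewrite (leq_trans lt_r) // leq_exp2l // leq_addr.
rewrite (walshE _ _ lt_cw) (walshE _ _ lt_c) (walshE _ _ lt_r') !big_split_ord /=.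
have low0 : \prod_(t < w) (if x t && bit (2 ^ w * c) t then -1 else 1) = 1 :> R.
  by apply: big1 => t _; rewrite bit_pow2_mul_low ?andbF.
have high0 : \prod_(t < c) (if x (w + t)%N && bit r (w + t) then -1 else 1) = 1 :> R.
  by apply: big1 => t _; rewrite bit_small ?andbF // (leq_trans lt_r) // leq_exp2l // leq_addr.
rewrite low0 high0 mul1r mulr1 mulrC; congr (_ * _); apply: eq_bigr => t _.
  by rewrite bit_pow2_mul_addr_high // leq_addr.
by rewrite bit_pow2_mul_addr_low.
Qed.

Lemma dirichletD_pow2_mul w c x y :
  dirichlet R (2 ^ w * c + 2 ^ w) x y =
  dirichlet R (2 ^ w * c) x y +
  walsh R (2 ^ w * c) x * walsh R (2 ^ w * c) y * dirichlet R (2 ^ w) x y.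
Proof.
rewrite /dirichlet big_split_ord /= mulr_sumr; congr (_ + _); apply: eq_bigr => j _.
by rewrite !walshD_pow2_mul //; ring.
Qed.

Lemma dirichlet_pow2_eq0 w x y t : (t < w)%N -> x t != y t ->
  dirichlet R (2 ^ w) x y = 0.
Proof.
elim: w => [|w IH] lt_tw neq_xy; first by rewrite ltn0 in lt_tw.
have := dirichletD_pow2_mul w 1 x y; rewrite muln1 addnn -mul2n -expnS => ->.
rewrite -[X in X + _]mul1r -mulrDl.
case: (ltnP t w) => [lt_tw' | le_wt]; first by rewrite IH // mulr0.
move: neq_xy; have -> : t = w by apply/eqP; rewrite eqn_leq le_wt -ltnS lt_tw.
by rewrite !walsh_pow2; case: (x w); case: (y w) => //= _; rewrite ?mulr1 ?mul1r subrr mul0r.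
Qed.

Lemma dirichlet_pow2_mul_eq0 w c x y t : (t < w)%N -> x t != y t ->
  dirichlet R (2 ^ w * c) x y = 0.
Proof.
move=> lt_tw neq_xy; elim: c => [|c IH]; first by rewrite muln0 /dirichlet big_ord0.
by rewrite mulnS addnC dirichletD_pow2_mul IH (dirichlet_pow2_eq0 lt_tw neq_xy) mulr0 addr0.
Qed.

Lemma dirichlet_pow2_eq k x y : (forall t, (t < k)%N -> x t = y t) ->
  dirichlet R (2 ^ k) x y = (2 ^ k)%:R.
Proof.
move=> eq_xy; rewrite /dirichlet (eq_bigr (fun _ => 1)) ?sumr_const ?card_ord //.
by move=> j _; rewrite -(eq_walsh _ (ltn_ord j) eq_xy) walsh_sqr.
Qed.

Lemma walsh_interval_point_sym k n m : (n < 2 ^ k)%N -> (m < 2 ^ k)%N ->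
  walsh R n (interval_point k m) = walsh R m (interval_point k n).
Proof.
move=> lt_n lt_m; rewrite (walshE _ _ lt_n) (walshE _ _ lt_m).
rewrite [LHS](reindex_inj (@rev_ord_inj k)) /=; apply: eq_bigr => t _.
have lt_tk := ltn_ord t; rewrite /interval_point ltn_ord.
have -> : (k - t.+1 < k)%N by lia.
have -> : (k - 1 - (k - t.+1) = t)%N by lia.
have -> : (k - 1 - t = k - t.+1)%N by lia.
by rewrite andbC.
Qed.

Lemma sum_walsh_interval_point k n n' : (n < 2 ^ k)%N -> (n' < 2 ^ k)%N ->
  \sum_(m < 2 ^ k) walsh R n (interval_point k m) * walsh R n' (interval_point k m) =
  (2 ^ k)%:R * (n == n')%:R.
Proof.
move=> lt_n lt_n'.
under eq_bigr => m _ do rewrite !(@walsh_interval_point_sym k _ m) //.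
rewrite -/(dirichlet R (2 ^ k) _ _).
case: eqP => [<- | neq_nn']; first by rewrite mulr1 dirichlet_pow2_eq.
have [t neq_bit] : exists t : 'I_k, bit n t != bit n' t.
  apply/existsP; apply: contra_notT neq_nn' => /existsPn eq_bits.
  apply: (bit_inj lt_n lt_n') => t lt_tk.
  by apply/eqP; have := eq_bits (Ordinal lt_tk); rewrite negbK.
have lt_tk := ltn_ord t.
rewrite mulr0; apply: (@dirichlet_pow2_eq0 _ _ _ (k - 1 - t)); rewrite /interval_point.
  by lia.
have -> : (k - 1 - t < k)%N by lia.
by have -> : (k - 1 - (k - 1 - t) = t)%N by lia.
Qed.

End WalshComRing.

Definition vnat d B (n : {ffun 'I_d -> 'I_B}) : 'I_d -> nat := fun l => n l.

(* Unlike psum, whose index type depends on N, box_sum ranges over the fixed box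
   [0, 2^k)^d, so partial sums and the values of tau share one index type. *)
Definition box_sum (R : nzRingType) d k (P : pred {ffun 'I_d -> 'I_(2 ^ k)})
    (b : ('I_d -> nat) -> R) (g : dyadicd d) : R :=
  \sum_(n | P n) b (vnat n) * walshd R (vnat n) g.

Arguments box_sum {R d} k P b g.

Lemma prodr_if0 (R : comNzRingType) (I : finType) (c : pred I) (F : I -> R) :
  \prod_i (if c i then F i else 0) = if [forall i, c i] then \prod_i F i else 0.
Proof.
case: (boolP [forall i, c i]) => [/forallP c_all | /forallPn [i not_ci]].
  by apply: eq_bigr => i _; rewrite c_all.
by rewrite (bigD1 i) //= (negbTE not_ci) mul0r.
Qed.

Section Cube.

Variables (R : comNzRingType) (d k : nat).
Notation box := {ffun 'I_d -> 'I_(2 ^ k)}.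

Lemma sum_walshd_cube_point (n n' : box) :
  \sum_(m : box) walshd R (vnat n) (cube_point k (vnat m)) *
                 walshd R (vnat n') (cube_point k (vnat m))
  = (2 ^ k)%:R ^+ d * (n == n')%:R.
Proof.
pose G l (j : 'I_(2 ^ k)) :=
  walsh R (n l) (interval_point k j) * walsh R (n' l) (interval_point k j).
rewrite (eq_bigr (fun m : box => \prod_l G l (m l))); last first.
  by move=> m _; rewrite /walshd -big_split.
rewrite -bigA_distr_bigA /G /=.
rewrite (eq_bigr (fun l => (2 ^ k)%:R * (n l == n' l)%:R)); last first.
  by move=> l _; rewrite sum_walsh_interval_point.
case: eqP => [<- | neq_nn'].
  rewrite mulr1 (eq_bigr (fun _ => (2 ^ k)%:R)) ?prodr_const ?card_ord //.
  by move=> l _; rewrite eqxx mulr1.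
have [l neq_l] : exists l, n l != n' l.
  apply/existsP; apply: contra_notT neq_nn' => /existsPn eq_nn'.
  by apply/ffunP => l; apply/eqP; rewrite -[_ == _]negbK eq_nn'.
by rewrite (bigD1 l) //= (negbTE neq_l) !mulr0 mul0r.
Qed.

Lemma box_sum_expansion (P : pred box) (b : ('I_d -> nat) -> R) (g : dyadicd d) :
  (2 ^ k)%:R ^+ d * box_sum k P b g =
  \sum_(m : box) box_sum k xpredT b (cube_point k (vnat m)) *
                 box_sum k P (fun n => walshd R n (cube_point k (vnat m))) g.
Proof.
pose W (n m : box) := walshd R (vnat n) (cube_point k (vnat m)).
symmetry; transitivity (\sum_(n' : box) \sum_(n | P n)
    b (vnat n') * walshd R (vnat n) g * \sum_(m : box) W n' m * W n m).
  under eq_bigr => m _ do rewrite /box_sum mulr_suml; rewrite exchange_big /=.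
  apply: eq_bigr => n' _; under eq_bigr => m _ do rewrite mulr_sumr.
  rewrite exchange_big /=; apply: eq_bigr => n _; rewrite mulr_sumr.
  by apply: eq_bigr => m _; rewrite /W; ring.
rewrite exchange_big /box_sum mulr_sumr; apply: eq_bigr => n _.
under eq_bigr => n' _ do rewrite /W sum_walshd_cube_point.
rewrite (bigD1 n) //= big1 ?addr0 => [|n' /negbTE ->]; last by rewrite !mulr0.
by rewrite eqxx mulr1 mulrC.
Qed.

Lemma box_sum_kernel_prod (N : 'I_d -> nat) (x g : dyadicd d) :
  (forall l, N l <= 2 ^ k)%N ->
  box_sum k [pred n : box | [forall l, n l < N l]%N] (fun n => walshd R n x) g =
  \prod_l dirichlet R (N l) (x l) (g l).
Proof.
move=> le_N; pose G l (j : 'I_(2 ^ k)) :=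
  if (j < N l)%N then walsh R j (x l) * walsh R j (g l) else 0.
transitivity (\prod_l \sum_(j : 'I_(2 ^ k)) G l j); last first.
  apply: eq_bigr => l _; rewrite /dirichlet
    (big_ord_widen _ (fun j => walsh R j (x l) * walsh R j (g l)) (le_N l)).
  by rewrite [RHS]big_mkcond.
rewrite (bigA_distr_bigA G) /box_sum big_mkcond /=; apply: eq_bigr => n _.
by rewrite /G prodr_if0; case: ifP => // _; rewrite /walshd -big_split.
Qed.

End Cube.

Lemma big_ffun_ord_widen (V : nmodType) d B B' (N : 'I_d -> nat)
    (F : ('I_d -> nat) -> V) :
  (0 < B)%N -> (B <= B')%N -> (forall l, N l <= B)%N ->
  \sum_(n : {ffun 'I_d -> 'I_B} | [forall l, n l < N l]%N) F (vnat n) =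
  \sum_(n : {ffun 'I_d -> 'I_B'} | [forall l, n l < N l]%N) F (vnat n).
Proof.
case: B => // B _ le_BB' le_NB.
pose widen (n : {ffun 'I_d -> 'I_B.+1}) := [ffun l => widen_ord le_BB' (n l)].
pose narrow (n : {ffun 'I_d -> 'I_B'}) := [ffun l => inord (n l) : 'I_B.+1].
rewrite [RHS](reindex_onto widen narrow) => [|n /forallP lt_nN]; last first.
  by apply/ffunP => l; apply: val_inj; rewrite !ffunE /= inordK // (leq_trans (lt_nN l)).
apply: eq_big => [n | n _].
  have -> : narrow (widen n) == n by apply/eqP/ffunP => l; apply: val_inj; rewrite !ffunE inord_val.
  by rewrite andbT; apply: eq_forallb => l; rewrite ffunE.
by congr F; apply: functional_extensionality => l; rewrite /vnat ffunE.
Qed.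

Lemma psum_box (R : nzRingType) d k (a : ('I_d -> nat) -> R) (N : 'I_d -> nat) g :
  (0 < d)%N -> (forall l, 0 < N l)%N -> (forall l, N l <= 2 ^ k)%N ->
  psum a N g = box_sum k [pred n : {ffun 'I_d -> 'I_(2 ^ k)} | [forall l, n l < N l]%N] a g.
Proof.
move=> d_gt0 N_gt0 le_N; rewrite /psum /box_sum.
apply: (big_ffun_ord_widen (fun n => a n * walshd R n g)).
- by rewrite (leq_trans (N_gt0 (Ordinal d_gt0))) ?(leq_bigmax (Ordinal d_gt0)).
- by apply/bigmax_leqP => l _.
- by move=> l; rewrite (leq_bigmax l).
Qed.

Lemma tau_box_sum (R : fieldType) d k (a : ('I_d -> nat) -> R)
    (m : {ffun 'I_d -> 'I_(2 ^ k)}) : (0 < d)%N ->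
  tau a k (vnat m) = (2 ^ (k * d))%:R^-1 * box_sum k xpredT a (cube_point k (vnat m)).
Proof.
move=> d_gt0; rewrite /tau (psum_box (k := k)) ?expn_gt0 //; congr (_ * _).
by apply: eq_bigl => n; apply/forallP => l.
Qed.

Lemma box_sum_cube_point_eq0 (R : numFieldType) d k (a : ('I_d -> nat) -> R)
    (m : {ffun 'I_d -> 'I_(2 ^ k)}) : (0 < d)%N ->
  tau a k (vnat m) = 0 -> box_sum k xpredT a (cube_point k (vnat m)) = 0.
Proof.
move=> d_gt0; rewrite tau_box_sum // => /eqP.
by rewrite mulf_eq0 invr_eq0 pnatr_eq0 expn_eq0 /= => /eqP.
Qed.

Lemma in_cube_sub d k w (m mw : 'I_d -> nat) (g : dyadicd d) : (w <= k)%N ->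
  in_cube w mw g -> (forall l (t : 'I_w), cube_point k m l t = g l t) ->
  forall g', in_cube k m g' -> in_cube w mw g'.
Proof.
move=> le_wk g_in agree g' g'_in l t lt_tw.
have lt_tk : (t < k)%N by apply: leq_trans le_wk.
by rewrite g'_in // -(g_in l t lt_tw) -(agree l (Ordinal lt_tw)) /cube_point lt_tk.
Qed.

Theorem proposition3 (R : realFieldType) (d : nat) (hd : (2 <= d)%N)
    (a : ('I_d -> nat) -> R) (w : nat) (mw : 'I_d -> nat)
    (hmw : forall l, (mw l < 2 ^ w)%N)
    (htau : forall (k : nat) (m : 'I_d -> nat),
        (forall l, (m l < 2 ^ k)%N) ->
        (forall g : dyadicd d, in_cube k m g -> in_cube w mw g) ->
        tau a k m = 0) :
  forall (g : dyadicd d), in_cube w mw g ->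
  forall (M : 'I_d -> nat), (forall l, (0 < M l)%N) ->
    psum a (fun l => 2 ^ w * M l)%N g = 0.
Proof.
move=> g g_in M M_gt0; have d_gt0 : (0 < d)%N := ltnW hd.
pose k := (w + \max_(l < d) M l)%N.
have le_N l : (2 ^ w * M l <= 2 ^ k)%N.
  by rewrite expnD leq_mul2l (leq_trans (leq_bigmax l)) ?orbT // ltnW // ltn_expl.
have pow_neq0 : (2 ^ k)%:R ^+ d != 0 :> R by rewrite expf_eq0 pnatr_eq0 expn_eq0 andbF.
rewrite (psum_box (k := k)) // => [|l]; last by rewrite muln_gt0 expn_gt0 M_gt0.
apply: (mulfI pow_neq0); rewrite mulr0 box_sum_expansion; apply: big1 => m _.
case: (boolP [forall l, forall t : 'I_w, cube_point k (vnat m) l t == g l t]).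
  move=> /forallP agree.
  have sub : forall g', in_cube k (vnat m) g' -> in_cube w mw g'.
    by apply: (in_cube_sub (leq_addr _ _) g_in) => l t; apply/eqP/(forallP (agree l)).
  by rewrite (box_sum_cube_point_eq0 d_gt0 (htau k (vnat m) (fun l => ltn_ord (m l)) sub)) mul0r.
move=> /forallPn [l /forallPn [t neq_t]].
rewrite box_sum_kernel_prod // (bigD1 l) //=.
by rewrite (dirichlet_pow2_mul_eq0 _ _ (ltn_ord t) neq_t) mul0r mulr0.
Qed.
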